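(* $\displaystyle\int_0^1 R(x)\,dx=\frac{3}{7}.$
   Context: Define $\rho$ on binary words: for $b=b_1b_2\dots$, $\rho(b)$ is obtained by deleting every digit $b_n=0$ and replacing every $b_n=1$ by $0$ if $n$ is odd and by $1$ if $n$ is even. For $x\in(0,1]$ let $\beta(x)$ be the unique binary expansion of $x$ with infinitely many $1$'s. Define $R:[0,1]\to[0,1]$ by $R(0)=2/3$ and, for $x\in(0,1]$, $R(x)=\sum_{n\ge1}c_n2^{-n}$ where $c=\rho(\beta(x))$. *)

From HB Require Import structures.
From mathcomp Require Import all_boot all_order all_algebra.
From mathcomp Require Import all_classical all_reals all_analysis.
From Stdlib Require Import ClassicalEpsilon.
Set Implicit Arguments. Unset Strict Implicit. Unset Printing Implicit Defensive.
Import Order.TTheory GRing.Theory Num.Theory numFieldNormedType.Exports.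
Local Open Scope classical_set_scope.
Local Open Scope ring_scope.

(* Infinite binary words b = b_1 b_2 ... are functions nat -> bool; the value
   at index 0 is irrelevant (digits are indexed from 1 as in the paper). *)

Definition inf_ones (b : nat -> bool) : Prop :=
  forall N : nat, exists n : nat, (N < n)%N /\ b n.

Definition is_binexp {R : realType} (x : R) (b : nat -> bool) : Prop :=
  (fun N : nat => \sum_(1 <= n < N) (b n)%:R / 2 ^+ n) @ \oo --> x.

Definition beta {R : realType} (x : R) : nat -> bool :=
  epsilon (inhabits (fun _ : nat => false))
          (fun b => inf_ones b /\ is_binexp x b).

(* c = rho(b) for an infinite word b with infinitely many 1's: if
   p_1 < p_2 < ... enumerate the positions n >= 1 with b_n = 1 (deleting the
   0's), then c_k = 0 if p_k is odd and c_k = 1 if p_k is even. *)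
Definition rho_rel (b c : nat -> bool) : Prop :=
  exists p : nat -> nat,
    [/\ (forall k, (1 <= k)%N -> (1 <= p k)%N /\ b (p k)),
        (forall k, (1 <= k)%N -> (p k < p k.+1)%N),
        (forall n, (1 <= n)%N -> b n -> exists2 k, (1 <= k)%N & p k = n) &
        (forall k, (1 <= k)%N -> c k = ~~ odd (p k))].

Definition rho (b : nat -> bool) : nat -> bool :=
  epsilon (inhabits (fun _ : nat => false)) (rho_rel b).

Definition Rmap {R : realType} (x : R) : R :=
  if x == 0 then 2 / 3
  else limn (fun N : nat => \sum_(1 <= n < N) (rho (beta x) n)%:R / 2 ^+ n : R).

From HB Require Import structures.
From mathcomp Require Import all_boot all_order all_algebra.
From mathcomp Require Import all_classical all_reals all_analysis.
From mathcomp Require Import measurable_realfun.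
From mathcomp Require Import ring lra zify.
From Stdlib Require Import ClassicalEpsilon.
Set Implicit Arguments. Unset Strict Implicit. Unset Printing Implicit Defensive.
Import Order.TTheory GRing.Theory Num.Theory numFieldNormedType.Exports.
Local Open Scope classical_set_scope.
Local Open Scope ring_scope.

(* Write
   dig x = [x > 1/2] and dbl x = 2x - dig x for the doubling map on (0, 1].
   Then beta x = dig x . beta (dbl x), and rho turns a leading 0 into a
   complement and a leading 1 into "0 followed by the complement", so
       R x = 1 - R (2x)          on (0, 1/2],
       R x = (1 - R (2x - 1))/2  on (1/2, 1]
   (Rmap_dbl, Rmap_lo, Rmap_hi).  The file proceeds in five steps:
   - binary words: partial sums, values, the greedy expansion and beta;
   - enumerations of the ones of a word, and how rho reacts to a shift;
   - the functional equation above;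
   - measurability of R, as the pointwise limit of the iterates of the
     functional equation started at 2/3 (the error after n steps is at most
     2^-(number of ones among the first n digits));
   - Lebesgue measure under x |-> a x + t, and the computation: with
     I = int_(0,1] R and J = int_(0,1] (1 - R), substitution gives
     I = J/2 + J/4, while I + J = 1, so I = 3/7. *)

Definition shiftw (b : nat -> bool) : nat -> bool := fun n => b n.+1.

Lemma inf_ones_shift b : inf_ones b -> inf_ones (shiftw b).
Proof.
move=> ones N; have [[|n] [Nn bn]] := ones N.+1; first by [].
by exists n.
Qed.

Section binary_sums.
Variable R : realType.

Definition binsum (c : nat -> bool) (N : nat) : R :=
  \sum_(1 <= n < N) (c n)%:R / 2 ^+ n.
Definition binval (c : nat -> bool) : R := limn (binsum c).

Lemma binsum_term_ge0 (c : nat -> bool) n : 0 <= (c n)%:R / 2 ^+ n :> R.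
Proof. by rewrite divr_ge0 // exprn_ge0. Qed.

Lemma binsum_ge0 c N : 0 <= binsum c N.
Proof. by apply: sumr_ge0 => n _; exact: binsum_term_ge0. Qed.

Lemma binsum_shift c N :
  binsum c N.+2 = (c 1%N)%:R / 2 + binsum (shiftw c) N.+1 / 2.
Proof.
rewrite /binsum big_ltn // expr1; congr (_ + _).
rewrite -[2%N]/(1 + 1)%N big_addn subn1 /= mulr_suml.
apply: eq_bigr => n _; rewrite /shiftw addn1 exprS invfM.
by rewrite mulrA mulrAC.
Qed.

Lemma binsum_le1 c N : binsum c N <= 1.
Proof.
elim: N c => [|[|N] IH] c; try by rewrite /binsum big_geq.
rewrite binsum_shift; have := IH (shiftw c).
have : (c 1%N)%:R <= 1 :> R by case: (c 1%N).
lra.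
Qed.

Lemma binsum_nondecreasing c : nondecreasing_seq (binsum c).
Proof.
move=> [|n] m nm; first by rewrite {1}/binsum big_geq // binsum_ge0.
rewrite /binsum [X in _ <= X](@big_cat_nat _ _ _ n.+1) //= lerDl.
by apply: sumr_ge0 => i _; exact: binsum_term_ge0.
Qed.

Lemma binsum_cvg c : binsum c @ \oo --> binval c.
Proof.
apply: nondecreasing_is_cvgn; first exact: binsum_nondecreasing.
by exists 1 => _ [n _ <-]; exact: binsum_le1.
Qed.

Lemma binval_range c : 0 <= binval c <= 1.
Proof.
apply/andP; split.
  by apply: limr_ge; [exact: binsum_cvg | apply: nearW => n; exact: binsum_ge0].
by apply: limr_le; [exact: binsum_cvg | apply: nearW => n; exact: binsum_le1].
Qed.

Lemma binval_shift c : binval c = (c 1%N)%:R / 2 + binval (shiftw c) / 2.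
Proof.
apply: cvg_lim => //; rewrite -2!cvg_shiftS.
have -> : (fun n => binsum c n.+2) =
          (fun n => (c 1%N)%:R / 2 + binsum (shiftw c) n.+1 / 2).
  by apply/funext => n; exact: binsum_shift.
apply: cvgD; first exact: cvg_cst.
by apply: cvgM; [rewrite cvg_shiftS; exact: binsum_cvg | exact: cvg_cst].
Qed.

(* 0.111... = 1: the word of ones is its own shift. *)
Lemma binval_ones : binval (fun _ => true) = 1.
Proof. by have := binval_shift (fun _ => true); rewrite /shiftw /=; lra. Qed.

Lemma binval_compl c c' : (forall k, (1 <= k)%N -> c k = ~~ c' k) ->
  binval c = 1 - binval c'.
Proof.
move=> cc'; rewrite -[X in X - _]binval_ones; apply: cvg_lim => //.
have -> : binsum c = (fun N => binsum (fun _ => true) N - binsum c' N).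
  apply/funext => N; rewrite /binsum -sumrB; apply: eq_big_nat => n /andP[n1 _].
  by rewrite (cc' n n1); case: (c' n) => /=; rewrite ?mul0r ?subrr ?subr0.
exact: (cvgB (@binsum_cvg xpredT) (@binsum_cvg c')).
Qed.

Lemma binexp_val (x : R) b : is_binexp x b -> x = binval b.
Proof. by move=> bx; apply/esym/cvg_lim. Qed.

Lemma binexp_shift (x : R) b :
  is_binexp x b -> is_binexp (2 * x - (b 1%N)%:R) (shiftw b).
Proof.
move=> bx; change (binsum (shiftw b) @ \oo --> 2 * x - (b 1%N)%:R).
have bx2 : (fun n => binsum b n.+2) @ \oo --> x.
  by rewrite (cvg_shiftS (fun n => binsum b n.+1)) cvg_shiftS.
rewrite -cvg_shiftS.
have -> : (fun n => binsum (shiftw b) n.+1) =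
          (fun n => 2 * binsum b n.+2 - (b 1%N)%:R).
  by apply/funext => n; rewrite binsum_shift; field.
exact: (cvgB (cvgM (cvg_cst _) bx2) (cvg_cst _)).
Qed.

Lemma binexp_pos (x : R) b : inf_ones b -> is_binexp x b -> 0 < x.
Proof.
move=> /(_ 0%N) [n [n0 bn]] /binexp_val ->.
apply: (@lt_le_trans _ _ (binsum b n.+1)).
  rewrite /binsum (big_nat_recr n 1) //= bn mul1r.
  by rewrite ltr_pwDr ?invr_gt0 ?exprn_gt0 // sumr_ge0 // => i _; exact: binsum_term_ge0.
apply: limr_ge; first exact: binsum_cvg.
by exists n.+1 => // N /= nN; exact: binsum_nondecreasing.
Qed.

Definition dig (y : R) : bool := 1/2 < y.
Definition dbl (y : R) : R := 2 * y - (dig y)%:R.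

Lemma dbl_in (y : R) : 0 < y <= 1 -> 0 < dbl y <= 1.
Proof.
rewrite /dbl /dig => /andP[y0 y1]; case: (ltP (1/2) y) => /= h; apply/andP; split; lra.
Qed.

Lemma iter_dbl_in n (y : R) : 0 < y <= 1 -> 0 < iter n dbl y <= 1.
Proof. by move=> y01; elim: n => [|n IH] //=; exact: dbl_in. Qed.

Lemma binexp_first_digit (x : R) b :
  inf_ones b -> is_binexp x b -> b 1%N = dig x.
Proof.
move=> ones bx; have sbx := binexp_shift bx.
have /andP[_ le1] : 0 <= 2 * x - (b 1%N)%:R <= 1.
  by rewrite (binexp_val sbx); exact: binval_range.
have gt0 := binexp_pos (inf_ones_shift ones) sbx.
rewrite /dig; case: (b 1%N) le1 gt0 => /= le1 gt0; apply/esym; first by apply/idP; lra.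
by apply/negbTE; rewrite -leNgt; lra.
Qed.

(* Hence such an expansion is unique: its digits are read along the orbit
   of x under the doubling map. *)
Lemma binexp_digits n (x : R) b : inf_ones b -> is_binexp x b ->
  b n.+1 = dig (iter n dbl x).
Proof.
elim: n x b => [|n IH] x b ones bx; first exact: binexp_first_digit.
rewrite iterSr /dbl -(binexp_first_digit ones bx).
exact: (IH _ (shiftw b) (inf_ones_shift ones) (binexp_shift bx)).
Qed.

Lemma pow2_unbounded (y : R) : exists j, y < 2 ^+ j.
Proof.
exists (Num.truncn `|y|).+1; apply: (le_lt_trans (ler_norm y)).
apply: (lt_le_trans (truncnS_gt _)); rewrite -natrX ler_nat.
exact/ltnW/ltn_expl.
Qed.

Lemma dbl_orbit_one (y : R) : 0 < y <= 1 -> exists j, dig (iter j dbl y).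
Proof.
move=> /andP[y0 _]; apply/not_existsP => no_one.
have orbit j : iter j dbl y = 2 ^+ j * y.
  elim: j => [|j IH]; first by rewrite mul1r.
  by rewrite iterS {1}/dbl (negbTE (introN idP (no_one j))) IH exprS subr0 mulrA.
have [j yj] := pow2_unbounded y^-1.
have : 1 < 2 ^+ j * y by rewrite -ltr_pdivrMr // div1r.
by move=> gt1; apply: (no_one j); rewrite /dig orbit; lra.
Qed.

Definition greedy (x : R) (n : nat) : bool :=
  if n is k.+1 then dig (iter k dbl x) else false.

Lemma binsum_greedy (x : R) N :
  binsum (greedy x) N.+1 = x - iter N dbl x / 2 ^+ N.
Proof.
elim: N => [|N IH]; first by rewrite /binsum big_geq // expr0 divr1 subrr.
rewrite /binsum (big_nat_recr N.+1) // -/(binsum _ _) IH /= /dbl exprS.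
by field; rewrite expf_neq0.
Qed.

Lemma greedy_binexp (x : R) : 0 < x <= 1 -> is_binexp x (greedy x).
Proof.
move=> x01; change (binsum (greedy x) @ \oo --> x); rewrite -cvg_shiftS.
under eq_fun do rewrite binsum_greedy.
suff : (fun n => x - iter n dbl x / 2 ^+ n) @ \oo --> x - 0 by rewrite subr0.
apply: cvgB; first exact: cvg_cst.
apply/cvgrPdist_le => e e0; have [j je] := pow2_unbounded e^-1.
exists j => // n /= jn; have /andP[orb0 orb1] := iter_dbl_in n x01.
have e2n : e^-1 <= 2 ^+ n by rewrite (le_trans (ltW je)) // ler_eXn2l // ltr1n.
rewrite sub0r normrN ger0_norm; last by rewrite divr_ge0 ?exprn_ge0 ?ltW.
rewrite ler_pdivrMr ?exprn_gt0 // (le_trans orb1) //.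
by rewrite -ler_pdivrMl // mulr1.
Qed.

Lemma greedy_inf_ones (x : R) : 0 < x <= 1 -> inf_ones (greedy x).
Proof.
move=> x01 N; have [j dj] := dbl_orbit_one (iter_dbl_in N x01).
by exists (j + N).+1; rewrite ltnS leq_addl /= iterD.
Qed.

(* The greedy expansion witnesses that beta x is well defined on (0, 1]. *)
Lemma beta_spec (x : R) : 0 < x <= 1 -> inf_ones (beta x) /\ is_binexp x (beta x).
Proof.
move=> x01; apply: (@epsilon_spec _ _ (fun b => inf_ones b /\ is_binexp x b)).
by exists (greedy x); split; [exact: greedy_inf_ones | exact: greedy_binexp].
Qed.

Lemma beta_digits (x : R) n : 0 < x <= 1 -> beta x n.+1 = dig (iter n dbl x).
Proof. by move=> /beta_spec[ones bx]; exact: binexp_digits. Qed.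

Lemma beta_dbl (x : R) n : 0 < x <= 1 -> (1 <= n)%N ->
  beta (dbl x) n = shiftw (beta x) n.
Proof.
move=> x01; case: n => [//|n] _.
by rewrite /shiftw !beta_digits ?dbl_in // iterSr.
Qed.

End binary_sums.
Arguments binsum {R}.
Arguments binval {R}.
Arguments dig {R}.
Arguments dbl {R}.

Definition ones_enum (b : nat -> bool) (p : nat -> nat) : Prop :=
  [/\ forall k, (1 <= k)%N -> (1 <= p k)%N /\ b (p k),
      forall k, (1 <= k)%N -> (p k < p k.+1)%N &
      forall n, (1 <= n)%N -> b n -> exists2 k, (1 <= k)%N & p k = n].

Section ones_enumeration.
Variables (b : nat -> bool) (p : nat -> nat).
Hypothesis pb : ones_enum b p.

Lemma enum_one k : (1 <= k)%N -> (1 <= p k)%N /\ b (p k).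
Proof. by case: pb => pos _ _; exact: pos. Qed.

Lemma enum_onto n : (1 <= n)%N -> b n -> exists2 k, (1 <= k)%N & p k = n.
Proof. by case: pb => _ _ onto; exact: onto. Qed.

Lemma enum_lt i j : (1 <= i)%N -> (i < j)%N -> (p i < p j)%N.
Proof.
case: pb => _ incr _ i1; elim: j => [//|j IH].
rewrite ltnS leq_eqVlt => /orP[/eqP <-|ij]; first exact: incr.
by rewrite (ltn_trans (IH ij)) // incr // (leq_trans i1 (ltnW ij)).
Qed.

Lemma enum_le i j : (1 <= i)%N -> (i <= j)%N -> (p i <= p j)%N.
Proof.
move=> i1; rewrite leq_eqVlt => /orP[/eqP <-//|ij].
exact/ltnW/enum_lt.
Qed.

End ones_enumeration.

(* Two enumerations agreeing below i compare at i: q i is a one position,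
   hence some p j, and j < i is impossible. *)
Lemma enum_le_of_agree b p q i : ones_enum b p -> ones_enum b q -> (1 <= i)%N ->
  (forall j, (1 <= j)%N -> (j < i)%N -> p j = q j) -> (p i <= q i)%N.
Proof.
move=> pb qb i1 agree; have [qi1 bqi] := enum_one qb i1.
have [j j1 pj] := enum_onto pb qi1 bqi.
have [ji|ij] := ltnP j i; last by rewrite -pj (enum_le pb).
by have := enum_lt qb j1 ji; rewrite -pj agree // ltnn.
Qed.

Lemma ones_enum_unique b p q : ones_enum b p -> ones_enum b q ->
  forall k, (1 <= k)%N -> p k = q k.
Proof.
move=> pb qb; elim/ltn_ind => k IH k1.
have agree j : (1 <= j)%N -> (j < k)%N -> p j = q j by move=> j1 jk; exact: IH.
apply/eqP; rewrite eqn_leq (enum_le_of_agree pb qb k1 agree).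
by rewrite (enum_le_of_agree qb pb k1) // => j j1 jk; rewrite agree.
Qed.

(* A word with infinitely many ones has an enumeration of its ones:
   iterate "next one position". *)
Lemma ones_enum_exists b : inf_ones b -> exists p, ones_enum b p.
Proof.
move=> ones.
have next_ex m : exists n, (m < n)%N && b n.
  by have [n [mn bn]] := ones m; exists n; rewrite mn bn.
pose next m := ex_minn (next_ex m).
have nextP m : (m < next m)%N && b (next m) by rewrite /next; case: ex_minnP.
have next_min m n : (m < n)%N -> b n -> (next m <= n)%N.
  by move=> mn bn; rewrite /next; case: ex_minnP => k _; apply; rewrite mn bn.
pose p k := iter k next 0%N.
have p_incr k : (p k < p k.+1)%N by case/andP: (nextP (p k)).
have bracket n : exists k, (p k < n.+1 <= p k.+1)%N.
  elim: n => [|n [k /andP[lo hi]]]; first by exists 0%N; rewrite /= (p_incr 0%N).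
  case: (ltnP n.+1 (p k.+1)) => hi'; first by exists k; rewrite hi' (ltn_trans lo).
  have e : p k.+1 = n.+1 by apply/eqP; rewrite eqn_leq hi' hi.
  by exists k.+1; rewrite -e ltnS leqnn /= (p_incr k.+1).
exists p; split.
- case=> [//|k] _; have /andP[lo bk] := nextP (p k).
  by split=> //; exact: leq_ltn_trans (leq0n _) lo.
- by move=> k _; exact: p_incr.
- case=> [//|n] _ bn; have [k /andP[lo hi]] := bracket n.
  by exists k.+1 => //; apply/eqP; rewrite eqn_leq hi next_min.
Qed.

Lemma rho_enum b p : inf_ones b -> ones_enum b p ->
  forall k, (1 <= k)%N -> rho b k = ~~ odd (p k).
Proof.
move=> ones pb k k1; have [q qb] := ones_enum_exists ones.
have [r [r1 r2 r3 rho_r]] : rho_rel b (rho b).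
  apply: (@epsilon_spec _ _ (rho_rel b)); exists (fun k => ~~ odd (q k)).
  by case: qb => q1 q2 q3; exists q.
by rewrite rho_r // (ones_enum_unique (And3 r1 r2 r3) pb).
Qed.

Lemma ones_enum_ext b b' p : (forall n, (1 <= n)%N -> b n = b' n) ->
  ones_enum b p -> ones_enum b' p.
Proof.
move=> bb' [pos incr onto]; split=> //.
- by move=> k k1; have [p1 bp] := pos k k1; rewrite -bb'.
- by move=> n n1 bn; apply: onto; rewrite // bb'.
Qed.

Lemma rho_ext b b' : inf_ones b -> (forall n, (1 <= n)%N -> b n = b' n) ->
  forall k, (1 <= k)%N -> rho b k = rho b' k.
Proof.
move=> ones bb' k k1; have [p pb] := ones_enum_exists ones.
have ones' : inf_ones b'.
  move=> N; have [n [Nn bn]] := ones N; exists n; rewrite -bb' //.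
  exact: leq_ltn_trans (leq0n N) Nn.
by rewrite (rho_enum ones pb) // (rho_enum ones' (ones_enum_ext bb' pb)).
Qed.

Lemma ones_enum_shiftw (b : nat -> bool) (q : nat -> nat) :
  (forall k, (1 <= k)%N -> (2 <= q k)%N /\ b (q k)) ->
  (forall k, (1 <= k)%N -> (q k < q k.+1)%N) ->
  (forall n, (2 <= n)%N -> b n -> exists2 k, (1 <= k)%N & q k = n) ->
  ones_enum (shiftw b) (fun k => (q k).-1).
Proof.
move=> pos incr onto; split.
- move=> k k1; have [q2 bq] := pos k k1.
  by rewrite /shiftw prednK; [split=> //; lia | lia].
- move=> k k1; have [q2 _] := pos k k1; have := incr k k1; lia.
- by move=> n n1 bn; have [k k1 qk] := onto n.+1 n1 bn; exists k; rewrite // qk.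
Qed.

(* Shifting a word whose first digit is 0 moves every one position down by
   one, flipping its parity: rho complements. *)
Lemma rho_shift_digit0 b : inf_ones b -> b 1%N = false ->
  forall k, (1 <= k)%N -> rho b k = ~~ rho (shiftw b) k.
Proof.
move=> ones b1 k k1; have [p pb] := ones_enum_exists ones.
have pos j : (1 <= j)%N -> (2 <= p j)%N /\ b (p j).
  move=> j1; have [pj1 bpj] := enum_one pb j1; split=> //.
  by rewrite ltn_neqAle pj1 andbT; apply: contraFN b1 => /eqP ->.
have sb : ones_enum (shiftw b) (fun j => (p j).-1).
  apply: ones_enum_shiftw => // [j j1|n n2 bn]; first by case: pb => _ incr _; exact: incr.
  exact: (enum_onto pb (ltnW n2) bn).
rewrite (rho_enum ones pb k1) (rho_enum (inf_ones_shift ones) sb k1).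
by case: (p k) (pos k k1) => [[]|m] //= _; rewrite negbK.
Qed.

Lemma rho_shift_digit1 b : inf_ones b -> b 1%N = true ->
  rho b 1%N = false /\ forall k, (1 <= k)%N -> rho b k.+1 = ~~ rho (shiftw b) k.
Proof.
move=> ones b1; have [p pb] := ones_enum_exists ones.
have p1 : p 1%N = 1%N.
  have [j j1 pj] := enum_onto pb (leqnn 1) b1.
  by apply/eqP; rewrite eqn_leq -{2}pj (enum_le pb) // (proj1 (enum_one pb (leqnn 1))).
have pos j : (1 <= j)%N -> (2 <= p j.+1)%N /\ b (p j.+1).
  by move=> j1; rewrite -{1}p1 (enum_lt pb) //; case: (enum_one pb (ltn0Sn j)).
have sb : ones_enum (shiftw b) (fun j => (p j.+1).-1).
  apply: ones_enum_shiftw => // [j j1|n n2 bn]; first by case: pb => _ incr _; exact: incr.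
  have [[|[|j]] // j1 pj] := enum_onto pb (ltnW n2) bn.
    by move: n2; rewrite -pj p1.
  by exists j.+1.
split; first by rewrite (rho_enum ones pb) // p1.
move=> k k1; rewrite (rho_enum ones pb (ltn0Sn k)) (rho_enum (inf_ones_shift ones) sb k1).
by case: (p k.+1) (pos k k1) => [[]|m] //= _; rewrite negbK.
Qed.

Section functional_equation.
Variable R : realType.

Lemma Rmap_binval (x : R) : x != 0 -> Rmap x = binval (rho (beta x)).
Proof. by move=> x0; rewrite /Rmap (negbTE x0). Qed.

Lemma Rmap_range (x : R) : 0 <= Rmap x <= 1.
Proof.
have [->|x0] := eqVneq x 0; last by rewrite Rmap_binval //; exact: binval_range.
by rewrite /Rmap eqxx; apply/andP; split; lra.
Qed.

Lemma Rmap_dbl (x : R) : 0 < x <= 1 ->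
  Rmap x = if dig x then (1 - Rmap (dbl x)) / 2 else 1 - Rmap (dbl x).
Proof.
move=> x01; have [ones _] := beta_spec x01.
have /andP[dx0 _] := dbl_in x01.
have rho_dbl k : (1 <= k)%N -> rho (shiftw (beta x)) k = rho (beta (dbl x)) k.
  by apply: (rho_ext (inf_ones_shift ones)) => n n1; rewrite beta_dbl.
have first_digit : beta x 1%N = dig x by rewrite (beta_digits 0).
rewrite !Rmap_binval ?gt_eqF //; last by case/andP: x01.
case: ifP first_digit => dx first_digit.
- have [rho1 rhoS] := rho_shift_digit1 ones first_digit.
  rewrite binval_shift rho1 mul0r add0r; congr (_ / 2).
  by apply: binval_compl => k k1; rewrite /shiftw rhoS // rho_dbl.
- apply: binval_compl => k k1.
  by rewrite (rho_shift_digit0 ones first_digit) // rho_dbl.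
Qed.

Lemma Rmap_lo (x : R) : 0 < x <= 1/2 -> Rmap x = 1 - Rmap (2 * x).
Proof.
move=> /andP[x0 x_half]; rewrite Rmap_dbl; last by apply/andP; split; lra.
by rewrite /dbl /dig ltNge x_half /= subr0.
Qed.

Lemma Rmap_hi (x : R) : 1/2 < x <= 1 -> Rmap x = (1 - Rmap (2 * x - 1)) / 2.
Proof.
move=> /andP[x_half x1]; rewrite Rmap_dbl; last by apply/andP; split; lra.
by rewrite /dbl /dig x_half.
Qed.

End functional_equation.

Section measurability.
Variable R : realType.

Lemma affine_measurable (a t : R) : measurable_fun setT (fun x : R => a * x + t).
Proof.
apply: continuous_measurable_fun => x; apply: continuousD; last exact: cvg_cst.
by apply: continuousM; [exact: cvg_cst | exact: cvg_id].
Qed.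

(* One step of the functional equation, with R(0) = 2/3, as an operator on
   functions; its iterates from the constant 2/3 approximate Rmap. *)
Definition Rstep (f : R -> R) (x : R) : R :=
  if x == 0 then 2/3
  else if x <= 1/2 then 1 - f (2 * x) else (1 - f (2 * x - 1)) / 2.
Definition Rapprox (n : nat) : R -> R := iter n Rstep (fun _ => 2/3).

Lemma Rstep_measurable f : measurable_fun setT f -> measurable_fun setT (Rstep f).
Proof.
move=> mf; apply: measurable_fun_ifT; [|exact: measurable_cst|apply: measurable_fun_ifT].
- apply: (measurable_fun_bool true); rewrite setTI.
  have -> : (fun x : R => x == 0) @^-1` [set true] = [set 0].
    by apply/seteqP; split => x /=; [move/eqP | move=> ->; rewrite eqxx].
  exact: measurable_set1.
- apply: (measurable_fun_bool true); rewrite setTI.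
  have -> : (fun x : R => x <= 1/2) @^-1` [set true] = `]-oo, 1/2]%classic.
    by apply/seteqP; split => x /=; rewrite in_itv.
  exact: measurable_itv.
- apply: measurable_funB; first exact: measurable_cst.
  have -> : (fun x => f (2 * x)) = f \o (fun x : R => 2 * x + 0).
    by apply/funext => x /=; rewrite addr0.
  by apply: measurableT_comp => //; exact: affine_measurable.
- apply: measurable_funM; last exact: measurable_cst.
  apply: measurable_funB; first exact: measurable_cst.
  by apply: measurableT_comp => //; exact: affine_measurable.
Qed.

Lemma Rapprox_measurable n : measurable_fun setT (Rapprox n).
Proof.
elim: n => [|n IH]; first exact: measurable_cst.
by rewrite /Rapprox iterS; exact: Rstep_measurable.
Qed.

Lemma Rstep_dbl f (x : R) : 0 < x <= 1 ->
  Rstep f x = if dig x then (1 - f (dbl x)) / 2 else 1 - f (dbl x).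
Proof.
move=> /andP[x0 _]; rewrite /Rstep gt_eqF // /dbl /dig.
by case: (ltP (1/2) x) => /=; rewrite ?subr0.
Qed.

(* weight n x = 2^-(number of ones among the first n digits of x): the
   factor by which the first n steps contract errors. *)
Fixpoint weight (n : nat) (x : R) : R :=
  if n is m.+1 then (if dig x then 1/2 else 1) * weight m (dbl x) else 1.

Lemma weight_range n x : 0 <= weight n x <= 1.
Proof.
elim: n x => [|n IH] x /=; first by rewrite ler01 lexx.
by have /andP[w0 w1] := IH (dbl x); case: (dig x); apply/andP; split; nra.
Qed.

Lemma weight_split a b x : weight (a + b) x = weight a x * weight b (iter a dbl x).
Proof.
elim: a x => [|a IH] x /=; first by rewrite mul1r.
by rewrite IH -iterSr mulrA.
Qed.

Lemma weight_nonincreasing x : nonincreasing_seq (weight^~ x).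
Proof.
move=> n m nm; rewrite -(subnKC nm) weight_split.
have /andP[w0 w1] := weight_range n x.
have /andP[v0 v1] := weight_range (m - n) (iter n dbl x).
nra.
Qed.

(* Infinitely many ones among the digits make the weights tend to 0. *)
Lemma weight_small m (x : R) : 0 < x <= 1 -> exists n, weight n x <= (1/2) ^+ m.
Proof.
elim: m x => [|m IH] x x01; first by exists 0%N; rewrite expr0.
have [j dj] := dbl_orbit_one x01.
have [n wn] := IH _ (iter_dbl_in j.+1 x01).
exists (j + n.+1)%N; rewrite weight_split /= dj -iterS.
have /andP[w0 w1] := weight_range j x.
have /andP[v0 v1] := weight_range n (iter j.+1 dbl x).
have h0 : 0 <= (1/2 : R) ^+ m by rewrite exprn_ge0.
by rewrite exprS; nra.
Qed.

(* A digit 1 halves the error of one step, a digit 0 preserves it. *)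
Lemma Rapprox_error n (x : R) : 0 < x <= 1 -> `|Rapprox n x - Rmap x| <= weight n x.
Proof.
elim: n x => [|n IH] x x01.
  by have /andP[r0 r1] := Rmap_range x; rewrite /= ler_norml; apply/andP; split; lra.
rewrite /Rapprox iterS -/(Rapprox n) Rstep_dbl // Rmap_dbl //=.
have := IH _ (dbl_in x01); rewrite !ler_norml => /andP[lo hi].
by case: (dig x); apply/andP; split; lra.
Qed.

Lemma Rapprox_cvg (x : R) : 0 <= x <= 1 -> (fun n => Rapprox n x) @ \oo --> Rmap x.
Proof.
move=> /andP[x0 x1]; have [->|xn0] := eqVneq x 0.
  have -> : (fun n => Rapprox n 0) = (fun _ => Rmap (0 : R)).
    by apply/funext => -[|n]; rewrite /Rmap eqxx // /Rapprox iterS /Rstep eqxx.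
  exact: cvg_cst.
have x01 : 0 < x <= 1 by rewrite x1 andbT lt_neqAle eq_sym xn0 x0.
apply/cvgrPdist_le => e e0; have [j je] := pow2_unbounded e^-1.
have [n0 wn0] := weight_small j x01.
exists n0 => // n /= n0n; rewrite distrC.
apply: (le_trans (Rapprox_error n x01)); apply: (le_trans (weight_nonincreasing x n0n)).
apply: (le_trans wn0); rewrite expr_div_n expr1n ler_pdivrMr ?exprn_gt0 //.
by rewrite -ler_pdivrMl // mulr1 ltW.
Qed.

Lemma Rmap_measurable : measurable_fun (`[0%R, 1%R] : set R) (@Rmap R).
Proof.
apply: (measurable_fun_cvg (h := Rapprox)).
  by move=> n; apply: measurable_funTS; exact: Rapprox_measurable.
by move=> x /=; rewrite in_itv /=; exact: Rapprox_cvg.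
Qed.

End measurability.

Section affine_change_of_variables.
Variable R : realType.
Local Notation mu := (@lebesgue_measure R).
Local Notation T := (measurableTypeR R).

Lemma affine_preimage_itv (a t l r : R) : 0 < a ->
  (fun x : T => a * x + t : T) @^-1` `]l, r] = `](l - t) / a, (r - t) / a]%classic.
Proof.
move=> a0; apply/seteqP; split => x /=; rewrite !in_itv /= ltr_pdivrMr // ler_pdivlMr //;
  move=> /andP[lo hi]; apply/andP; split; lra.
Qed.

(* affine_measurable, read on the type carrying Lebesgue measure. *)
Lemma affine_measurableT (a t : R) :
  measurable_fun [set: T] (fun x : T => a * x + t : T).
Proof. exact: (affine_measurable a t). Qed.

Section affine_image.
Variables a t : R.

Definition affine_image : set T -> \bar R := pushforward mu (fun x : T => a * x + t : T).

Let affine_image0 : affine_image set0 = 0%E.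
Proof. by rewrite /affine_image /pushforward preimage_set0 measure0. Qed.

Let affine_image_ge0 A : (0 <= affine_image A)%E.
Proof. exact: (measure_ge0 mu). Qed.

Let affine_image_sigma_additive : semi_sigma_additive affine_image.
Proof.
move=> F mF tF mUF; rewrite /affine_image /pushforward preimage_bigcup.
apply: measure_semi_sigma_additive.
- by move=> n; rewrite -[X in measurable X]setTI; exact: (affine_measurableT a t).
- apply/trivIsetP => /= i j _ _ ij; rewrite -preimage_setI.
  by move/trivIsetP : tF => /(_ _ _ _ _ ij) ->//; rewrite preimage_set0.
- by rewrite -preimage_bigcup -[X in measurable X]setTI; exact: (affine_measurableT a t).
Qed.

HB.instance Definition _ := isMeasure.Build _ _ _ affine_image
  affine_image0 affine_image_ge0 affine_image_sigma_additive.

End affine_image.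

(* Lebesgue measure scales by a under x |-> a x + t: it suffices to check
   this on half-open intervals. *)
Lemma lebesgue_affine_image (a t : R) (a0 : 0 < a) (A : set T) : measurable A ->
  mu A = mscale (NngNum (ltW a0)) (affine_image a t) A.
Proof.
apply: lebesgue_measure_unique => _ [[l r]] _ <-.
change (mu `]l, r] = a%:E * affine_image a t `]l, r])%E.
rewrite /affine_image /pushforward affine_preimage_itv //.
rewrite !lebesgue_measure_itv /= !lte_fin ltr_pM2r ?invr_gt0 // ltrBlDr subrK.
case: ifP => _; last by rewrite mule0.
by rewrite -EFinD -EFinM; congr EFin; field; rewrite gt_eqF.
Qed.

Lemma ge0_integral_affine (a t : R) (D : set T) (g : T -> \bar R) : 0 < a ->
  measurable D -> measurable_fun D g -> (forall y, D y -> (0 <= g y)%E) ->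
  (\int[mu]_(x in (fun x : T => (a * x + t)%R : T) @^-1` D) g (a * x + t)%R =
   (a^-1)%:E * \int[mu]_(y in D) g y)%E.
Proof.
move=> a0 mD mg g0.
rewrite -(@ge0_integral_pushforward _ _ _ _ R _ (affine_measurableT a t)) //;
  last by move=> y /set_mem; exact: g0.
change (\int[affine_image a t]_(y in D) g y = (a^-1)%:E * \int[mu]_(y in D) g y)%E.
have a'0 : 0 <= a^-1 by rewrite invr_ge0 ltW.
rewrite (eq_measure_integral (mscale (NngNum a'0) mu)) ?ge0_integral_mscale //.
move=> A mA _; have := lebesgue_affine_image t a0 mA.
change (mu A = a%:E * affine_image a t A -> affine_image a t A = (a^-1)%:E * mu A)%E.
by move=> ->; rewrite muleA -EFinM mulVf ?gt_eqF // mul1e.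
Qed.

End affine_change_of_variables.

Section integral_value.
Variable R : realType.
Local Notation mu := (@lebesgue_measure R).
Local Notation T := (measurableTypeR R).

Lemma measurable_itvT (i : interval R) : measurable ([set` i] : set T).
Proof. exact (measurable_itv i). Qed.

Lemma Rmap_measurable_oc (l r : R) : 0 <= l -> r <= 1 ->
  measurable_fun (`]l, r] : set T) (fun x : T => (Rmap (x : R))%:E).
Proof.
move=> l0 r1; have sub01 : (`]l, r] : set T) `<=` `[0%R, 1%R].
  by move=> x /=; rewrite !in_itv /= => /andP[lo hi]; apply/andP; split; lra.
apply: (measurable_funS (measurable_itv _) sub01).
have mR : measurable_fun (`[0%R, 1%R] : set R) (EFin \o @Rmap R).
  by apply/measurable_EFinP; exact: Rmap_measurable.
exact: mR.
Qed.

Lemma Rmap_compl_measurable_oc (l r : R) : 0 <= l -> r <= 1 ->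
  measurable_fun (`]l, r] : set T) (fun x : T => (1 - Rmap (x : R))%:E).
Proof.
move=> l0 r1; apply/measurable_EFinP; apply: measurable_funB; first exact: measurable_cst.
by apply/measurable_EFinP; exact: Rmap_measurable_oc.
Qed.

Lemma Rmap_ge0 (x : T) : (0 <= (Rmap (x : R))%:E)%E.
Proof. by rewrite lee_fin; case/andP: (Rmap_range (x : R)). Qed.

Lemma Rmap_compl_ge0 (x : T) : (0 <= (1 - Rmap (x : R))%:E)%E.
Proof. by rewrite lee_fin subr_ge0; case/andP: (Rmap_range (x : R)). Qed.

Lemma integral_Rmap_compl :
  (\int[mu]_(x in `]0%R, 1%R]) (Rmap x)%:E +
   \int[mu]_(x in `]0%R, 1%R]) (1 - Rmap x)%:E = 1%:E)%E.
Proof.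
have m01 := measurable_itvT `]0%R, 1%R].
rewrite -ge0_integralD //; last 4 first.
- by move=> x _; exact: Rmap_ge0.
- exact: Rmap_measurable_oc.
- by move=> x _; exact: Rmap_compl_ge0.
- exact: Rmap_compl_measurable_oc.
rewrite (eq_integral (fun _ => 1%:E)); last by move=> x _; rewrite -EFinD subrKC.
rewrite integral_cst // mul1e.
change (mu `]0%R, 1%R] = 1%:E).
by rewrite lebesgue_measure_itv /= lte_fin ltr01 oppr0 adde0.
Qed.

Lemma integral_Rmap_split :
  (\int[mu]_(x in `]0%R, 1%R]) (Rmap x)%:E =
   \int[mu]_(x in `]0%R, 2^-1%R]) (Rmap x)%:E +
   \int[mu]_(x in `]2^-1%R, 1%R]) (Rmap x)%:E)%E.
Proof.
have halves : (`]0%R, 1%R]%classic : set T) = `]0%R, 2^-1%R] `|` `]2^-1%R, 1%R].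
  apply/seteqP; split => x /=; rewrite !in_itv /=.
    move=> /andP[lo hi]; have [h|h] := leP x 2^-1;
      [left | right]; apply/andP; split; lra.
  by case=> /andP[lo hi]; apply/andP; split; lra.
rewrite halves ge0_integral_setU //; first last.
- rewrite disj_set2E; apply/eqP/seteqP; split => x //=.
  by rewrite !in_itv /= => -[/andP[_ hi] /andP[lo _]]; have := lt_le_trans lo hi; rewrite ltxx.
- by move=> x _; exact: Rmap_ge0.
- by rewrite -halves; exact: Rmap_measurable_oc.
Qed.

(* Substituting x = y/2 in the functional equation on (0, 1/2]: the lower
   half contributes J/2. *)
Lemma integral_Rmap_lower :
  (\int[mu]_(x in `]0%R, 2^-1%R]) (Rmap x)%:E =
   (2^-1)%:E * \int[mu]_(y in `]0%R, 1%R]) (1 - Rmap y)%:E)%E.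
Proof.
rewrite -(@ge0_integral_affine _ 2 0) //; last 2 first.
- exact: Rmap_compl_measurable_oc.
- by move=> y _; exact: Rmap_compl_ge0.
rewrite affine_preimage_itv // !subr0 mul0r div1r.
apply: eq_integral => x; rewrite inE /= in_itv /= => x01.
by rewrite addr0 Rmap_lo // div1r.
Qed.

(* Substituting x = (y + 1)/2 in the functional equation on (1/2, 1]: the
   upper half contributes J/4. *)
Lemma integral_Rmap_upper :
  (\int[mu]_(x in `]2^-1%R, 1%R]) (Rmap x)%:E =
   (2^-1)%:E * ((2^-1)%:E * \int[mu]_(y in `]0%R, 1%R]) (1 - Rmap y)%:E))%E.
Proof.
have half0 : 0 <= 2^-1 :> R by rewrite invr_ge0.
rewrite -[X in (_ * X)%E]ge0_integralZl_EFin //; last 2 first.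
- by move=> y _; exact: Rmap_compl_ge0.
- exact: Rmap_compl_measurable_oc.
rewrite -(@ge0_integral_affine _ 2 (-1)) //; last 2 first.
- by apply: measurable_funeM; exact: Rmap_compl_measurable_oc.
- by move=> y _; rewrite mule_ge0 // Rmap_compl_ge0.
rewrite affine_preimage_itv // !opprK add0r div1r (_ : (1 + 1) / 2 = 1 :> R) //;
  last by rewrite divff.
apply: eq_integral => x; rewrite inE /= in_itv /= => x01.
by rewrite -EFinM Rmap_hi ?div1r // mulrC.
Qed.

(* I = J/2 + J/4 and I + J = 1 give I = 3/7. *)
Lemma integral_Rmap_oc : (\int[mu]_(x in `]0%R, 1%R]) (Rmap x)%:E = (3 / 7 : R)%:E)%E.
Proof.
have sum := integral_Rmap_compl.
rewrite integral_Rmap_split integral_Rmap_lower integral_Rmap_upper in sum *.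
have : (0 <= \int[mu]_(y in `]0%R, 1%R]) (1 - Rmap y)%:E)%E.
  by apply: integral_ge0 => y _; exact: Rmap_compl_ge0.
case: (\int[mu]_(y in _) _)%E sum => [J| |] //= sum _.
  by move: sum; rewrite -!EFinM -!EFinD => -[sum]; congr EFin; lra.
by move: sum; rewrite !gt0_muley ?lte_fin ?invr_gt0.
Qed.

End integral_value.

(* The statement views Lebesgue measure on the real line R with its Borel
   structure rather than on measurableTypeR R, where the library declares
   it; the sigma-algebras coincide, so the same function is a measure there
   too. *)
Section lebesgue_measure_on_reals.
Variable R : realType.
Definition lebesgue_measureR : set R -> \bar R := @lebesgue_measure R.
Let lebesgue_measureR0 : lebesgue_measureR set0 = 0%E.
Proof. exact: measure0. Qed.
Let lebesgue_measureR_ge0 (A : set R) : (0 <= lebesgue_measureR A)%E.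
Proof. exact: (measure_ge0 (@lebesgue_measure R)). Qed.
Let lebesgue_measureR_sigma_additive : semi_sigma_additive lebesgue_measureR.
Proof. exact: (@measure_semi_sigma_additive _ _ _ (@lebesgue_measure R)). Qed.
HB.instance Definition _ := isMeasure.Build _ R R lebesgue_measureR
  lebesgue_measureR0 lebesgue_measureR_ge0 lebesgue_measureR_sigma_additive.
End lebesgue_measure_on_reals.

Lemma Rmap_integrable (R : realType) :
  (@lebesgue_measureR R).-integrable `[0%R, 1%R] (EFin \o (@Rmap R)).
Proof.
apply: measurable_bounded_integrable; [exact: measurable_itv| |exact: Rmap_measurable|].
  change (@lebesgue_measure R `[0%R, 1%R]%classic < +oo)%E.
  by rewrite lebesgue_measure_itv /= lte_fin ltr01 ltry.
exists 1; split=> // M M1 x _ /=; have /andP[r0 r1] := Rmap_range x.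
by rewrite ger0_norm //; lra.
Qed.

Theorem proposition4p4 (R : realType) :
  (lebesgue_measure : set R -> \bar R).-integrable `[0%R, 1%R] (EFin \o (@Rmap R)) /\
  (\int[lebesgue_measure]_(x in `[0%R, 1%R]) (Rmap x)%:E = (3 / 7 : R)%:E)%E.
Proof.
split; first exact: (Rmap_integrable R).
by rewrite -integral_itv_obnd_cbnd ?integral_Rmap_oc //; exact: Rmap_measurable_oc.
Qed.
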